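(* Let $f=(f_m)_{m\ge1}$ be a Boolean function and let $k,r,w,t$ be positive integers with $t\mid k$ and $r<w$. There is no $c$-competitive deterministic online algorithm (with unlimited computational power) for $BH^t_{k,r,w}(f)$, where $c<\big(\lfloor (t+1)/2\rfloor\cdot w+(t-\lfloor(t+1)/2\rfloor)\cdot r\big)/(tr)$.
   Context: A Boolean function $f$ is a family $f=(f_m)_{m\ge1}$ with $f_m:\{0,1\}^m\to\{0,1\}$. Online minimization problems: inputs $I=(x_1,\dots,x_n)$, outputs $O=(y_1,\dots,y_n)$, positive cost $cost(I,O)$, $Opt(I)$ an output of minimum cost. A deterministic online algorithm $A$ computes $y_i$ as an arbitrary function of $x_1,\dots,x_i$. $A$ is $c$-competitive if there is a constant $\alpha\ge0$ such that for every $n$ and every input $I$ of length $n$, $cost(I,A(I))\le c\cdot cost(I,Opt(I))+\alpha$. The Black Hats problem $BH^t_{k,r,w}(f)$ (with $z=k/t$): inputs over $\{0,1,2\}$ are $I=(2,X_1,2,X_2,\dots,2,X_k)$ with $X_i\in\{0,1\}^{m_i}$, $m_i\ge1$, $n=\sum_i(m_i+1)$. Let $y_j$ be the answer at the position of the $j$-th symbol $2$, and $g_j(I)=\bigoplus_{i=j}^k f_{m_i}(X_i)$. The answers $y_1,\dots,y_k$ form $t$ consecutive blocks of $z$; block $i$ costs $r$ if $y_j=g_j(I)$ for all $j$ in the block and $w$ otherwise; the total cost is the sum of block costs.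
   Formalization: Competitiveness is taken with α = 0, so cost(I,A(I)) ≤ c·cost(I,Opt(I)) for every input I, and f is assumed to take both values 0 and 1 on nonempty strings. The statement above fails without it. *)

From mathcomp Require Import all_boot all_order all_algebra.
Set Implicit Arguments. Unset Strict Implicit. Unset Printing Implicit Defensive.
Import Order.TTheory GRing.Theory Num.Theory.

(* A Boolean function f = (f_m)_{m>=1} is represented as f : seq bool -> bool,
   f_m being the restriction of f to strings of length m (length 0 is never used). *)

(* Input symbols are the naturals 0,1,2.  The Black Hats input
   (2, X_1, 2, X_2, ..., 2, X_k) is given by the list Xs = [X_1; ...; X_k]. *)
Definition bh_input (Xs : seq (seq bool)) : seq nat :=
  flatten [seq 2 :: map nat_of_bool X | X <- Xs].

Definition bh_valid (k : nat) (Xs : seq (seq bool)) : bool :=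
  (size Xs == k) && all (fun X => 0 < size X) Xs.

Definition twos_pos (s : seq nat) : seq nat :=
  [seq i.+1 | i <- iota 0 (size s) & nth 0 s i == 2].

(* g_j(I) = XOR_{i=j}^{k} f(X_i)   (here j is 0-indexed: gval f Xs j = g_{j+1}). *)
Definition gval (f : seq bool -> bool) (Xs : seq (seq bool)) (j : nat) : bool :=
  foldr addb false [seq f X | X <- drop j Xs].

Definition bh_cost (f : seq bool -> bool) (k r w t : nat)
    (Xs : seq (seq bool)) (ys : seq bool) : nat :=
  let z := k %/ t in
  \sum_(b < t)
    (if all (fun j => nth false ys j == gval f Xs j) (iota (b * z) z)
     then r else w).

Definition bh_opt_cost (f : seq bool -> bool) (k r w t : nat)
    (Xs : seq (seq bool)) : nat :=
  let costf := fun y : {ffun 'I_k -> bool} =>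
    bh_cost f k r w t Xs [seq y i | i <- enum 'I_k] in
  costf [arg min_(y < [ffun=> false] : {ffun 'I_k -> bool}) costf y].

(* A deterministic online algorithm: y_i = A (x_1, ..., x_i).  Its answers at
   the positions of the symbols 2. *)
Definition alg_answers (A : seq nat -> bool) (I : seq nat) : seq bool :=
  [seq A (take p I) | p <- twos_pos I].

Definition alg_cost (A : seq nat -> bool) (f : seq bool -> bool) (k r w t : nat)
    (Xs : seq (seq bool)) : nat :=
  bh_cost f k r w t Xs (alg_answers A (bh_input Xs)).

Definition competitive_with (R : realFieldType) (f : seq bool -> bool)
    (k r w t : nat) (c alpha : R) (A : seq nat -> bool) : Prop :=
  forall Xs, bh_valid k Xs ->
    ((alg_cost A f k r w t Xs)%:R <= c * (bh_opt_cost f k r w t Xs)%:R + alpha)%R.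

Definition strictly_competitive (R : realFieldType) (f : seq bool -> bool)
    (k r w t : nat) (c : R) (A : seq nat -> bool) : Prop :=
  competitive_with f k r w t c 0 A.

From mathcomp Require Import all_boot all_order all_algebra zify.
Import Order.TTheory GRing.Theory Num.Theory.

(* An optimal output answers every g_j correctly, so it costs exactly t r.
   Against any online algorithm, feed k - 1 copies of x1 followed by a last
   block X in {x1, x2}.  The algorithm's answers are fixed before X is read,
   while switching X between x1 and x2 flips every g_j.  Hence the first answer
   of each of the t blocks is wrong for exactly one choice of X, and one choice
   makes at least ceil(t/2) blocks cost w. *)

Lemma twos_pos_cat s u :
  twos_pos (s ++ u) = twos_pos s ++ [seq i + size s | i <- twos_pos u].
Proof.
rewrite /twos_pos size_cat iotaD filter_cat map_cat; congr (_ ++ _).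
  congr map; apply: eq_in_filter => i; rewrite mem_iota /= => lt_i_s.
  by rewrite nth_cat lt_i_s.
rewrite -{1}[size s]addn0 (iotaDl (size s) 0) filter_map -!map_comp.
rewrite (@eq_filter _ _ (fun i => nth 0 u i == 2)); last first.
  by move=> i /=; rewrite nth_cat ltnNge leq_addr /= addKn.
by apply: eq_map => i /=; rewrite addSn addnC.
Qed.

Lemma twos_pos_block X : twos_pos (2 :: map nat_of_bool X) = [:: 1].
Proof.
rewrite /twos_pos /= size_map; congr (_ :: _).
rewrite -[RHS]/(map S [::]) -(filter_pred0 (iota 1 (size X))); congr map.
apply: eq_in_filter => -[|i]; rewrite mem_iota //= => lt_i_X.
by rewrite (nth_map false); [case: nth | lia].
Qed.

Lemma bh_input_rcons Xs X :
  bh_input (rcons Xs X) = bh_input Xs ++ 2 :: map nat_of_bool X.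
Proof. by rewrite /bh_input map_rcons flatten_rcons. Qed.

Lemma alg_answers_rcons A Xs X :
  alg_answers A (bh_input (rcons Xs X)) =
  rcons (alg_answers A (bh_input Xs)) (A (rcons (bh_input Xs) 2)).
Proof.
rewrite bh_input_rcons /alg_answers twos_pos_cat twos_pos_block map_cat -cats1.
congr (_ ++ _); last first.
  by rewrite /= add1n take_cat ltnNge leqnSn subSnn /= take0 cats1.
apply/eq_in_map => _ /mapP [i + ->]; rewrite mem_filter mem_iota.
by case/and3P=> _ _ lt_i_s; rewrite takel_cat.
Qed.

Lemma foldr_addb b s : foldr addb b s = foldr addb false s (+) b.
Proof. by elim: s => //= a s ->; rewrite addbA. Qed.

Lemma gval_rcons f Xs X j : j <= size Xs ->
  gval f (rcons Xs X) j = gval f Xs j (+) f X.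
Proof.
by move=> le_j_Xs; rewrite /gval drop_rcons // map_rcons foldr_rcons addbF foldr_addb.
Qed.

Lemma bh_cost_ge f k r w t Xs ys : r <= w -> t * r <= bh_cost f k r w t Xs ys.
Proof.
move=> le_r_w; rewrite /bh_cost -[t in t * r]card_ord -sum_nat_const.
by apply: leq_sum => b _; case: ifP.
Qed.

Lemma bh_cost_correct f k r w t Xs : t %| k ->
  bh_cost f k r w t Xs [seq gval f Xs j | j <- iota 0 k] = t * r.
Proof.
move=> dvd_t_k; rewrite /bh_cost -[t in RHS]card_ord -sum_nat_const.
apply: eq_bigr => b _; rewrite ifT //; apply/allP => j.
rewrite mem_iota => /andP [_ lt_j].
have lt_j_k : j < k.
  by have := ltn_ord b; move: lt_j; rewrite -{2}(divnK dvd_t_k); nia.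
by rewrite (nth_map 0) ?size_iota // nth_iota.
Qed.

Lemma bh_opt_costE f k r w t Xs : t %| k -> r <= w ->
  bh_opt_cost f k r w t Xs = t * r.
Proof.
move=> dvd_t_k le_r_w; rewrite /bh_opt_cost.
case: arg_minnP => //= y _ y_min; apply/eqP; rewrite eqn_leq bh_cost_ge // andbT.
have := y_min [ffun i : 'I_k => gval f Xs i] isT.
have -> : [seq [ffun i : 'I_k => gval f Xs i] i | i <- enum 'I_k]
        = [seq gval f Xs j | j <- iota 0 k].
  by rewrite -val_enum_ord -map_comp; apply: eq_map => i /=; rewrite ffunE.
by rewrite bh_cost_correct.
Qed.

Definition block_errors f k t Xs ys :=
  \sum_(b < t) (nth false ys (b * (k %/ t)) != gval f Xs (b * (k %/ t))).

Lemma bh_cost_block_errors f k r w t Xs ys : 0 < k %/ t -> r <= w ->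
  t * r + (w - r) * block_errors f k t Xs ys <= bh_cost f k r w t Xs ys.
Proof.
move=> blocks_gt0 le_r_w; rewrite /bh_cost /block_errors big_distrr /=.
rewrite -[t in t * r]card_ord -sum_nat_const -big_split /=.
apply: leq_sum => b _; case: eqP => [_ | wrong]; first by rewrite muln0 addn0; case: ifP.
rewrite muln1 subnKC // ifF //; apply/negP => /allP/(_ (b * (k %/ t))).
by rewrite mem_iota leqnn -addn1 leq_add2l blocks_gt0 => /(_ isT)/eqP/wrong.
Qed.

Lemma block_errors_flip f k t Xs Xs' ys :
  (forall b : 'I_t, gval f Xs (b * (k %/ t)) != gval f Xs' (b * (k %/ t))) ->
  block_errors f k t Xs ys + block_errors f k t Xs' ys = t.
Proof.
move=> flip; rewrite /block_errors -big_split /= -[RHS]card_ord -sum1_card.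
apply: eq_bigr => b _; move: (flip b).
by case: (nth _ _ _); case: (gval f Xs _); case: (gval f Xs' _).
Qed.

Lemma cost_lower_bound h e t r w : h <= e <= t -> r <= w ->
  h * w + (t - h) * r <= t * r + (w - r) * e.
Proof.
case/andP=> le_he le_et le_r_w.
have -> : h * w + (t - h) * r = t * r + (w - r) * h by nia.
by rewrite leq_add2l leq_mul2l le_he orbT.
Qed.

Lemma adversary_input (A : seq nat -> bool) f k r w t x1 x2 :
  0 < size x1 -> 0 < size x2 -> f x1 != f x2 ->
  0 < k -> t %| k -> r <= w ->
  exists Xs, bh_valid k Xs /\
    t.+1./2 * w + (t - t.+1./2) * r <= alg_cost A f k r w t Xs.
Proof.
move=> x1_gt0 x2_gt0 f12 k_gt0 dvd_t_k le_r_w.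
set z := k %/ t; have def_k : k = z * t by rewrite divnK.
have z_gt0 : 0 < z by move: k_gt0; rewrite def_k muln_gt0 => /andP [].
pose pre := nseq k.-1 x1.
pose ys := alg_answers A (bh_input (rcons pre x1)).
have ys_indep X : alg_answers A (bh_input (rcons pre X)) = ys.
  by rewrite /ys !alg_answers_rcons.
have valid X : 0 < size X -> bh_valid k (rcons pre X).
  move=> X_gt0; rewrite /bh_valid size_rcons size_nseq prednK // eqxx.
  by rewrite all_rcons X_gt0 all_nseq x1_gt0 orbT.
have flip (b : 'I_t) : gval f (rcons pre x1) (b * z) != gval f (rcons pre x2) (b * z).
  have le_bz : b * z <= size pre.
    rewrite size_nseq -ltnS prednK // def_k mulnC ltn_mul2l z_gt0.
    exact: ltn_ord.
  by rewrite !gval_rcons // (inj_eq (@addbI _)).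
have := block_errors_flip _ _ _ _ _ ys flip.
set e1 := block_errors _ _ _ _ _; set e2 := block_errors _ _ _ _ _ => sum_e.
have cost_ge X : t * r + (w - r) * block_errors f k t (rcons pre X) ys
                 <= alg_cost A f k r w t (rcons pre X).
  by rewrite /alg_cost ys_indep bh_cost_block_errors.
have [half_e1 | half_e2] : t.+1./2 <= e1 \/ t.+1./2 <= e2 by lia.
- exists (rcons pre x1); split; first exact: valid.
  apply: leq_trans (cost_ge x1); apply: cost_lower_bound => //.
  by rewrite -/e1 half_e1 -sum_e leq_addr.
- exists (rcons pre x2); split; first exact: valid.
  apply: leq_trans (cost_ge x2); apply: cost_lower_bound => //.
  by rewrite -/e2 half_e2 -sum_e leq_addl.
Qed.

Theorem theorem3 (R : realFieldType) (f : seq bool -> bool) (k r w t : nat) (c : R) :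
  (exists x1 x2 : seq bool, [/\ 0 < size x1, 0 < size x2 & f x1 != f x2]) ->
  0 < k -> 0 < r -> 0 < w -> 0 < t -> t %| k -> r < w ->
  (c < (t.+1./2 * w + (t - t.+1./2) * r)%:R / (t * r)%:R)%R ->
  ~ exists A : seq nat -> bool, strictly_competitive f k r w t c A.
Proof.
move=> [x1 [x2 [x1_gt0 x2_gt0 f12]]] k_gt0 r_gt0 _ t_gt0 dvd_t_k lt_r_w lt_c [A compA].
have le_r_w := ltnW lt_r_w.
have [Xs [validXs costA]] :=
  adversary_input A f k r w t x1 x2 x1_gt0 x2_gt0 f12 k_gt0 dvd_t_k le_r_w.
rewrite ltr_pdivlMr ?ltr0n ?muln_gt0 ?t_gt0 ?r_gt0 // in lt_c.
have := compA Xs validXs; rewrite addr0 bh_opt_costE // => /le_lt_trans/(_ lt_c).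
by rewrite ltr_nat ltnNge costA.
Qed.
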